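(* Let $D$ be a contractive distance, convex in each argument, such that for every state the infimum defining $E_D$ is attained by some separable state. Then for every state $\rho$ and every $0\le\epsilon\le E_D(\rho)$, $$(E_D)^{(D)}_\epsilon(\rho)=E_D(\rho)-\epsilon,$$ where $(E_D)^{(D)}_\epsilon$ is the $\epsilon$-measure of $E_D$ taken with respect to the same distance $D$.
   Context: $\mathcal H$ is a finite-dimensional multipartite Hilbert space, $\mathcal D(\mathcal H)$ its density matrices, $\mathcal S$ the separable states (convex combinations of product states). A distance $D$ is a metric on density matrices; convex in each argument means $D(p\rho_1+(1-p)\rho_2,\sigma)\le pD(\rho_1,\sigma)+(1-p)D(\rho_2,\sigma)$; contractive means $D(\Lambda[\rho],\Lambda[\sigma])\le D(\rho,\sigma)$ for every CPT map $\Lambda$. $E_D(\rho)=\inf_{\sigma\in\mathcal S}D(\rho,\sigma)$. For a function $F$ on states and $\epsilon\ge0$, $F^{(D)}_\epsilon(\rho)=\inf\{F(\sigma)\mid \sigma\in\mathcal D(\mathcal H),\ D(\rho,\sigma)\le\epsilon\}$. *)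

(* Complex scalars: an arbitrary numClosedFieldType C
   (the field of complex numbers is an instance). *)
From HB Require Import structures.
From mathcomp Require Import all_boot all_order all_algebra.
Set Implicit Arguments. Unset Strict Implicit. Unset Printing Implicit Defensive.
Import Order.TTheory GRing.Theory Num.Theory.
Local Open Scope ring_scope.

Definition adjmx (C : numClosedFieldType) m n (A : 'M[C]_(m, n)) : 'M[C]_(n, m) :=
  (map_mx Num.conj A)^T.

Definition psd (C : numClosedFieldType) n (A : 'M[C]_n) : Prop :=
  adjmx A = A /\ forall v : 'cV[C]_n, 0 <= (adjmx v *m A *m v) 0 0.

Definition density (C : numClosedFieldType) n (A : 'M[C]_n) : Prop :=
  psd A /\ \tr A = 1.

(* Multipartite system with k parties, party i of dimension d i.
   Computational basis of the total space = tuples of local basis indices. *)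
Definition Idx (k : nat) (d : 'I_k -> nat) : finType :=
  {dffun forall i : 'I_k, 'I_(d i)}.

Definition dimH (k : nat) (d : 'I_k -> nat) : nat := #|Idx d|.

(* tensor product rho_0 (x) ... (x) rho_{k-1}, in coordinates *)
Definition prod_op (C : numClosedFieldType) (k : nat) (d : 'I_k -> nat)
  (rhos : forall i : 'I_k, 'M[C]_(d i)) : 'M[C]_(dimH d) :=
  \matrix_(a, b) \prod_(i < k)
      rhos i (@enum_val (Idx d) predT a i) (@enum_val (Idx d) predT b i).

Definition separable (C : numClosedFieldType) (k : nat) (d : 'I_k -> nat)
  (sigma : 'M[C]_(dimH d)) : Prop :=
  exists (m : nat) (p : 'I_m -> C) (rhos : 'I_m -> forall i : 'I_k, 'M[C]_(d i)),
    [/\ forall j, 0 <= p j, \sum_(j < m) p j = 1,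
        forall j i, density (rhos j i)
      & sigma = \sum_(j < m) p j *: prod_op (rhos j)].

(* block (i,j) of an operator on C^m (x) C^n *)
Definition blockmx (C : numClosedFieldType) m n (X : 'M[C]_(m * n)) (i j : 'I_m)
  : 'M[C]_n := \matrix_(r, s) X (mxvec_index i r) (mxvec_index j s).

(* Completely positive trace-preserving map on operators of C^n:
   linear, trace preserving, and id_m (x) L maps psd operators to psd
   operators for every m. *)
Definition CPTP (C : numClosedFieldType) n (L : 'M[C]_n -> 'M[C]_n) : Prop :=
  [/\ linear L,
      forall X, \tr (L X) = \tr X
    & forall (m : nat) (X Y : 'M[C]_(m * n)),
        (forall (i j : 'I_m) (r s : 'I_n),
            Y (mxvec_index i r) (mxvec_index j s) = L (blockmx X i j) r s) ->
        psd X -> psd Y].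

Definition metric_on_states (C : numClosedFieldType) n
  (D : 'M[C]_n -> 'M[C]_n -> C) : Prop :=
  forall rho sigma tau, density rho -> density sigma -> density tau ->
    [/\ 0 <= D rho sigma, D rho sigma = 0 <-> rho = sigma,
        D rho sigma = D sigma rho & D rho tau <= D rho sigma + D sigma tau].

Definition convex_each_arg (C : numClosedFieldType) n
  (D : 'M[C]_n -> 'M[C]_n -> C) : Prop :=
  forall (p : C) rho1 rho2 sigma, 0 <= p <= 1 ->
    density rho1 -> density rho2 -> density sigma ->
    D (p *: rho1 + (1 - p) *: rho2) sigma <= p * D rho1 sigma + (1 - p) * D rho2 sigma
 /\ D sigma (p *: rho1 + (1 - p) *: rho2) <= p * D sigma rho1 + (1 - p) * D sigma rho2.

Definition contractive (C : numClosedFieldType) n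
  (D : 'M[C]_n -> 'M[C]_n -> C) : Prop :=
  forall L, CPTP L -> forall rho sigma, density rho -> density sigma ->
    D (L rho) (L sigma) <= D rho sigma.

Definition is_inf (C : numClosedFieldType) (S : C -> Prop) (x : C) : Prop :=
  (forall y, S y -> x <= y) /\ (forall z, (forall y, S y -> z <= y) -> z <= x).

Definition is_E_D (C : numClosedFieldType) (k : nat) (d : 'I_k -> nat)
  (D : 'M[C]_(dimH d) -> 'M[C]_(dimH d) -> C) (E : 'M[C]_(dimH d) -> C) : Prop :=
  forall rho, density rho ->
    is_inf (fun y => exists sigma, separable sigma /\ y = D rho sigma) (E rho).

(* the set whose infimum defines F^{(D)}_eps(rho) *)
Definition eps_set (C : numClosedFieldType) n (D : 'M[C]_n -> 'M[C]_n -> C)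
  (F : 'M[C]_n -> C) (eps : C) (rho : 'M[C]_n) : C -> Prop :=
  fun y => exists sigma, [/\ density sigma, D rho sigma <= eps & y = F sigma].

(* Proof idea.
   - Lower bound: E_D is 1-Lipschitz for D.  If tau' is a closest separable
     state to sigma, the triangle inequality gives
       E_D(rho) <= D(rho,tau') <= D(rho,sigma) + E_D(sigma),
     so every sigma with D(rho,sigma) <= eps has E_D(sigma) >= E_D(rho) - eps.
   - Attainment: let tau be a closest separable state to rho and mix
     sigma_q = q rho + (1-q) tau.  Convexity gives D(rho,sigma_q) <= (1-q)E_D(rho)
     and E_D(sigma_q) <= D(sigma_q,tau) <= q E_D(rho); q = 1 - eps/E_D(rho)
     makes sigma_q an admissible state with E_D(sigma_q) <= E_D(rho) - eps.
   The only matrix-theoretic input is that separable matrices are states (so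
   that the metric and convexity axioms apply to them); this is proved first,
   via a Gram factorisation of positive semidefinite matrices, which shows
   that tensor products of states are states. *)

From HB Require Import structures.
From mathcomp Require Import all_boot all_order all_algebra.
Set Implicit Arguments. Unset Strict Implicit. Unset Printing Implicit Defensive.
Import Order.TTheory GRing.Theory Num.Theory.
Local Open Scope ring_scope.

Lemma sum_prod_dep (R : comNzRingType) (k : nat) (d : 'I_k -> nat)
  (F : forall i : 'I_k, 'I_(d i) -> R) :
  \sum_(a : Idx d) \prod_(i < k) F i (a i) = \prod_(i < k) \sum_(j : 'I_(d i)) F i j.
Proof.
pose P_ := fun i : 'I_k => [ffun j : 'I_(d i) => F i j].
rewrite (reindex (@dffun_of_fprod _ (fun i => 'I_(d i)))); last first.
  by apply/onW_bij/dffun_of_fprod_bij.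
transitivity (\sum_(t : fprod (fun i => 'I_(d i))) \prod_(i in 'I_k) P_ i (t i)).
  apply: eq_bigr => t _; apply: eq_bigr => i _.
  by rewrite ffunE /dffun_of_fprod ffunE.
rewrite (@big_fprod R 0 1 *%R _ _ _ P_).
rewrite -(bigA_distr_big_dep (tagged_with (fun i : 'I_k => 'I_(d i)))
                             (fun i j => untag 0 (P_ i) j)).
apply: eq_bigr => i _.
transitivity (\sum_(j : 'I_(d i)) P_ i j); last by apply: eq_bigr => j _; rewrite ffunE.
by rewrite (big_tag P_ i); apply: eq_bigl.
Qed.

Section PositiveSemidefinite.
Variable C : numClosedFieldType.

Lemma adjmxE m n (A : 'M[C]_(m, n)) i j : adjmx A i j = (A j i)^*.
Proof. by rewrite /adjmx !mxE. Qed.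

Lemma adjmxM m n p (A : 'M[C]_(m, n)) (B : 'M[C]_(n, p)) :
  adjmx (A *m B) = adjmx B *m adjmx A.
Proof. by rewrite /adjmx map_mxM trmx_mul. Qed.

Lemma quadE n (A : 'M[C]_n) (v : 'cV[C]_n) :
  (adjmx v *m A *m v) 0 0 = \sum_a \sum_b (v a 0)^* * A a b * v b 0.
Proof.
rewrite mxE exchange_big /=; apply: eq_bigr => b _; rewrite mxE big_distrl /=.
by apply: eq_bigr => a _; rewrite adjmxE.
Qed.

Lemma psd0 n : psd (0 : 'M[C]_n).
Proof.
split; first by apply/matrixP => i j; rewrite adjmxE !mxE rmorph0.
by move=> v; rewrite mulmx0 mul0mx mxE.
Qed.

Lemma psd_add n (A B : 'M[C]_n) : psd A -> psd B -> psd (A + B).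
Proof.
move=> [Ah Ap] [Bh Bp]; split.
  by apply/matrixP => i j; rewrite adjmxE !mxE rmorphD /= -!adjmxE Ah Bh.
by move=> v; rewrite mulmxDr mulmxDl mxE addr_ge0.
Qed.

Lemma psd_scale n (A : 'M[C]_n) (p : C) : 0 <= p -> psd A -> psd (p *: A).
Proof.
move=> p0 [Ah Ap]; split.
  by apply/matrixP => i j; rewrite adjmxE !mxE rmorphM /= geC0_conj // -adjmxE Ah.
by move=> v; rewrite -scalemxAr -scalemxAl mxE mulr_ge0.
Qed.

Lemma psd_sum n m (p : 'I_m -> C) (M : 'I_m -> 'M[C]_n) :
  (forall j, 0 <= p j) -> (forall j, psd (M j)) -> psd (\sum_(j < m) p j *: M j).
Proof.
move=> p0 Mp; apply: (big_ind (fun X => psd X)); [exact: psd0 | exact: psd_add |].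
by move=> j _; apply: psd_scale.
Qed.

Lemma gram_psd n (J : finType) (g : J -> 'I_n -> C) :
  psd (\matrix_(a, b) \sum_L (g L a)^* * g L b).
Proof.
split.
  apply/matrixP => a b; rewrite adjmxE !mxE rmorph_sum; apply: eq_bigr => L _.
  by rewrite rmorphM /= conjCK mulrC.
move=> v; rewrite quadE.
have -> : \sum_a \sum_b (v a 0)^* * (\matrix_(a, b) \sum_L (g L a)^* * g L b) a b * v b 0
   = \sum_L (\sum_b g L b * v b 0)^* * (\sum_b g L b * v b 0).
  transitivity (\sum_a \sum_b \sum_L (v a 0)^* * (g L a)^* * (g L b * v b 0)).
    apply: eq_bigr => a _; apply: eq_bigr => b _.
    rewrite mxE big_distrr big_distrl /=; apply: eq_bigr => L _.
    by rewrite !mulrA.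
  transitivity (\sum_L \sum_a \sum_b (v a 0)^* * (g L a)^* * (g L b * v b 0)).
    by rewrite [RHS]exchange_big /=; apply: eq_bigr => a _; rewrite exchange_big.
  apply: eq_bigr => L _.
  rewrite rmorph_sum big_distrl /=; apply: eq_bigr => a _.
  rewrite big_distrr /=; apply: eq_bigr => b _.
  by rewrite rmorphM /= [(v a 0)^* * _]mulrC.
by apply: sumr_ge0 => L _; rewrite mulrC mul_conjC_ge0.
Qed.

Definition gram_factor n (A : 'M[C]_n) (l r : 'I_n) : C :=
  sqrtC (spectral_diag A 0 l) * spectralmx A l r.

(* Conversely every psd matrix is the Gram matrix of its spectral square root
   (the eigenvalues of a psd matrix are nonnegative). *)
Lemma psd_gram_factor n (A : 'M[C]_n) : psd A ->
  forall r s, A r s = \sum_l (gram_factor A l r)^* * gram_factor A l s.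
Proof.
move=> [Ah Apos].
have AtC : map_mx Num.conj A^T = A by rewrite -[RHS]Ah /adjmx map_trmx.
have Anorm : A \is normalmx by rewrite qualifE /= AtC.
set P := spectralmx A; set lam := spectral_diag A.
have AE : A = map_mx Num.conj P^T *m diag_mx lam *m P.
  by rewrite {1}(orthomx_spectralP Anorm) invmx_unitary // spectral_unitarymx.
have PPt : P *m map_mx Num.conj P^T = 1%:M by apply/unitarymxP/spectral_unitarymx.
have lam_ge0 l : 0 <= lam 0 l.
  have := Apos (map_mx Num.conj P^T *m delta_mx l 0).
  rewrite adjmxM.
  have -> : adjmx (map_mx Num.conj P^T) = P.
    by apply/matrixP => i j; rewrite adjmxE !mxE conjCK.
  have -> : adjmx (delta_mx l 0 : 'cV[C]_n) = delta_mx 0 l.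
    apply/matrixP => i j; rewrite adjmxE !mxE andbC.
    by case: (_ && _); rewrite ?rmorph1 ?rmorph0.
  rewrite AE !mulmxA -(mulmxA _ P) PPt mulmx1 -(mulmxA _ P) PPt mulmx1.
  rewrite mul_mx_diag mxE (bigD1 l) //= big1 ?addr0; last first.
    by move=> j /negbTE jl; rewrite !mxE jl /= mulr0n mulr0.
  by rewrite !mxE !eqxx /= mulr1n mul1r mulr1.
move=> r s; rewrite {1}AE mxE; apply: eq_bigr => l _.
rewrite mul_mx_diag !mxE rmorphM /= (geC0_conj (x := sqrtC (lam 0 l))) ?sqrtC_ge0 //.
rewrite [sqrtC _ * (P l r)^*]mulrC !mulrA -(mulrA _ (sqrtC _) (sqrtC _)).
by rewrite -expr2 sqrtCK.
Qed.

Lemma density_mix n (A B : 'M[C]_n) (q : C) :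
  0 <= q <= 1 -> density A -> density B -> density (q *: A + (1 - q) *: B).
Proof.
move=> /andP[q0 q1] [Ap At] [Bp Bt]; split.
  by apply: psd_add; apply: psd_scale => //; rewrite subr_ge0.
by rewrite mxtraceD !mxtraceZ At Bt !mulr1 addrC subrK.
Qed.

End PositiveSemidefinite.

Section SeparableStates.
Variables (C : numClosedFieldType) (k : nat) (d : 'I_k -> nat).

(* A tensor product of states is a state: it is the Gram matrix of the
   tensor product of the local Gram factors, and its trace factorises. *)
Lemma prod_op_density (rhos : forall i : 'I_k, 'M[C]_(d i)) :
  (forall i, density (rhos i)) -> density (prod_op rhos).
Proof.
move=> Hd; split.
  pose G (L : Idx d) (a : 'I_(dimH d)) :=
    \prod_(i < k) gram_factor (rhos i) (L i) (@enum_val (Idx d) predT a i).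
  have -> : prod_op rhos = \matrix_(a, b) \sum_L (G L a)^* * G L b.
    apply/matrixP => a b; rewrite !mxE.
    under eq_bigr => i _ do rewrite (psd_gram_factor (proj1 (Hd i))).
    rewrite -sum_prod_dep; apply: eq_bigr => L _.
    by rewrite /G rmorph_prod -big_split.
  exact: gram_psd.
rewrite /mxtrace.
transitivity (\sum_(x : Idx d) \prod_(i < k) rhos i (x i) (x i)).
  rewrite (big_enum_val (A := predT) (fun x : Idx d => \prod_(i < k) rhos i (x i) (x i))).
  by apply: eq_bigr => a _; rewrite mxE.
rewrite (sum_prod_dep (fun i j => rhos i j j)).
by rewrite big1 // => i _; have [_ <-] := Hd i.
Qed.

Lemma separable_density (sigma : 'M[C]_(dimH d)) : separable sigma -> density sigma.
Proof.
move=> [m [p [rhos [p0 p1 Hr ->]]]]; split.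
  by apply: psd_sum => // j; exact: (proj1 (prod_op_density (Hr j))).
rewrite raddf_sum /= -p1; apply: eq_bigr => j _.
by rewrite mxtraceZ (proj2 (prod_op_density (Hr j))) mulr1.
Qed.

End SeparableStates.

Lemma is_inf_attained (C : numClosedFieldType) (S : C -> Prop) (x y : C) :
  (forall y', S y' -> x <= y') -> S y -> y <= x -> is_inf S x.
Proof.
move=> low Sy yx; split => // z zlow.
exact: le_trans (zlow y Sy) yx.
Qed.

(* For 0 <= eps <= e the ratio eps / e lies in [0, 1] and eps / e * e = eps,
   including the degenerate case e = 0 (where eps = 0 and x / 0 = 0). *)
Lemma ratio_bounded (R : numFieldType) (eps e : R) :
  0 <= eps -> eps <= e -> 0 <= eps / e <= 1 /\ eps / e * e = eps.
Proof.
move=> eps0 epse; have [e0 | e_neq0] := eqVneq e 0.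
  have eps_0 : eps = 0 by apply/eqP; rewrite eq_le eps0 -e0 epse.
  by rewrite eps_0 e0 !mul0r lexx ler01.
have e_gt0 : 0 < e by rewrite lt_def e_neq0 (le_trans eps0 epse).
by rewrite divr_ge0 ?ler_pdivrMr ?mul1r ?divfK ?(ltW e_gt0).
Qed.

Section SmoothedEntanglement.
Variables (C : numClosedFieldType) (k : nat) (d : 'I_k -> nat).
Variables (D : 'M[C]_(dimH d) -> 'M[C]_(dimH d) -> C) (E : 'M[C]_(dimH d) -> C).
Hypothesis D_metric : metric_on_states D.
Hypothesis E_is_E_D : is_E_D D E.
Hypothesis E_attained :
  forall rho, density rho -> exists sigma, separable sigma /\ D rho sigma = E rho.

Lemma D_self rho : density rho -> D rho rho = 0.
Proof. by move=> rhoD; have [_ [_ self] _ _] := D_metric rhoD rhoD rhoD; apply: self. Qed.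

(* E_D is 1-Lipschitz with respect to D (triangle inequality through a
   closest separable state of sigma). *)
Lemma E_lipschitz rho sigma : density rho -> density sigma ->
  E rho <= D rho sigma + E sigma.
Proof.
move=> rhoD sigmaD; have [tau [tauS <-]] := E_attained sigmaD.
have tauD := separable_density tauS.
have [_ _ _ triangle] := D_metric rhoD sigmaD tauD.
by apply: le_trans triangle; apply: (proj1 (E_is_E_D rhoD)); exists tau.
Qed.

Lemma eps_set_lower_bound rho eps : density rho ->
  forall y, eps_set D E eps rho y -> E rho - eps <= y.
Proof.
move=> rhoD y [sigma [sigmaD Dle ->]].
rewrite lerBlDl; apply: le_trans (E_lipschitz rhoD sigmaD) _.
by rewrite lerD2r.
Qed.

Hypothesis D_convex : convex_each_arg D.

Lemma mix_closest_separable rho tau (q : C) :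
  density rho -> separable tau -> D rho tau = E rho -> 0 <= q <= 1 ->
  let sigma := q *: rho + (1 - q) *: tau in
  [/\ density sigma, D rho sigma <= (1 - q) * E rho & E sigma <= q * E rho].
Proof.
move=> rhoD tauS tauE q01 sigma.
have tauD := separable_density tauS.
have sigmaD : density sigma by apply: density_mix.
have [_ close] := D_convex q01 rhoD tauD rhoD.
have [far _] := D_convex q01 rhoD tauD tauD.
split=> //.
  by apply: le_trans close _; rewrite D_self // mulr0 add0r tauE.
have E_le : E sigma <= D sigma tau by apply: (proj1 (E_is_E_D sigmaD)); exists tau.
by apply: le_trans E_le (le_trans far _); rewrite D_self // mulr0 addr0 tauE.
Qed.

End SmoothedEntanglement.

Theorem mainTheorem10 (C : numClosedFieldType) (k : nat) (d : 'I_k -> nat)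
  (D : 'M[C]_(dimH d) -> 'M[C]_(dimH d) -> C) (E : 'M[C]_(dimH d) -> C) :
  metric_on_states D -> convex_each_arg D -> contractive D ->
  is_E_D D E ->
  (forall rho, density rho -> exists sigma, separable sigma /\ D rho sigma = E rho) ->
  forall (rho : 'M[C]_(dimH d)) (eps : C),
    density rho -> 0 <= eps -> eps <= E rho ->
    is_inf (eps_set D E eps rho) (E rho - eps).
Proof.
move=> Dm Dc _ HE Hatt rho eps rhoD eps0 epsE.
have [tau [tauS tauE]] := Hatt rho rhoD.
have [/andP[ratio0 ratio1] ratioK] := ratio_bounded eps0 epsE.
pose q := 1 - eps / E rho.
have q01 : 0 <= q <= 1 by rewrite subr_ge0 ratio1 lerBlDr lerDl ratio0.
have [sigmaD close entangled] := mix_closest_separable Dm HE Dc rhoD tauS tauE q01.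
have one_minus_q : 1 - q = eps / E rho by rewrite /q opprB addrC subrK.
apply: (is_inf_attained (eps_set_lower_bound Dm HE Hatt rhoD)).
  by exists (q *: rho + (1 - q) *: tau); split; rewrite // -ratioK -one_minus_q.
by rewrite /q mulrBl mul1r ratioK in entangled.
Qed.
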